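(* Let $X=\mathbb A^2$ with coordinates $x,y$, let $n,m$ be positive integers, $0<\lambda\leq1$, and $B=\lambda\cdot(x^m+y^n=0)$, and assume $(X,B)$ is lc. Then $$\mathrm{mld}(X\ni0,B)=\inf\{p_1+p_2-\min\{\lambda mp_1,\lambda np_2\}\mid (p_1,p_2)\in\mathbb N^2\}.$$
   Context: $\mathbb N$ is the set of positive integers. For a prime divisor $E$ over $X$ (on $Y$ with birational $g:Y\to X$, $K_Y+B_Y=g^*(K_X+B)$), $a(E,X,B)=1-\mathrm{mult}_EB_Y$; $\mathrm{mld}(X\ni0,B)=\inf a(E,X,B)$ over prime divisors $E$ over $X$ with center the origin $0$. $(X,B)$ lc means $a(E,X,B)\geq0$ for all prime divisors $E$ over $X$. *)

From HB Require Import structures.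
From mathcomp Require Import all_boot all_order all_algebra.
From mathcomp Require Import classical_sets boolp reals ereal.
Set Implicit Arguments. Unset Strict Implicit. Unset Printing Implicit Defensive.
Import Order.TTheory GRing.Theory Num.Theory.
Local Open Scope ring_scope.
Local Open Scope classical_set_scope.

(* Polynomials in two variables over F: {poly {poly F}}.
   The INNER variable is the first coordinate ("x", or "s" in a chart),
   the OUTER variable is the second coordinate ("y", or "t" in a chart). *)
Section Defs.
Variable F : fieldType.
Definition poly2 := {poly {poly F}}.
Definition xv : poly2 := ('X : {poly F})%:P.
Definition yv : poly2 := 'X.
Definition cst (c : F) : poly2 := c%:P%:P.

Definition eval2 (p P Q : poly2) : poly2 :=
  \sum_(i < size p) (\sum_(j < size p`_i) cst (p`_i)`_j * P ^+ j) * Q ^+ i.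

Definition pmap := (poly2 * poly2)%type.
Definition comp_pmap (psi : pmap) (P Q : poly2) : pmap :=
  (eval2 psi.1 P Q, eval2 psi.2 P Q).

Definition start (p : F * F) : pmap := (cst p.1 + xv, cst p.2 + yv).

(* psi : local coordinates (a,b) centred at the current centre P.
   Blowing up P gives the exceptional curve E_P ~ P^1; its points are
   Some c  (the point (0,c) of the chart a = a', b = a' b') and
   None    (the remaining point, origin of the chart a = a' b', b = b').
   [step psi o] gives local coordinates centred at that point of E_P. *)
Definition step (psi : pmap) (o : option F) : pmap :=
  match o with
  | Some c => comp_pmap psi xv (xv * (cst c + yv))
  | None => comp_pmap psi (xv * yv) yv
  end.

(* Every prime divisor over X with centre a closed point p is obtained by
   successively blowing up the centre: start at p, move along the centres
   listed in s, then blow up once more.  [chart p s] is the chart (s,t) of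
   the last blow-up in which the last exceptional divisor E is {s = 0}. *)
Definition centre_coords (p : F * F) (s : seq (option F)) : pmap :=
  foldl step (start p) s.
Definition chart (p : F * F) (s : seq (option F)) : pmap :=
  comp_pmap (centre_coords p s) xv (xv * yv).

Definition dx (q : poly2) : poly2 := map_poly (@deriv F) q.
Definition dy (q : poly2) : poly2 := deriv q.
Definition jac (Phi : pmap) : poly2 :=
  dx Phi.1 * dy Phi.2 - dy Phi.1 * dx Phi.2.

(* order of vanishing along {x = 0} (the largest k with x^k | q) *)
Definition coefx (q : poly2) (i : nat) : {poly F} := q`_i.
Definition ordx (q : poly2) : nat :=
  \max_(k < (\max_(i < size q) size (coefx q i)).+1 |
        [forall i : 'I_(size q), dvdp 'X^k (coefx q i)]) k.

Definition fmn (m n : nat) : poly2 := xv ^+ m + yv ^+ n.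

Definition irreducible2 (g : poly2) : Prop :=
  g != 0 /\ g \isn't a GRing.unit /\
  forall a b : poly2, g = a * b -> a \is a GRing.unit \/ b \is a GRing.unit.

Variable R : realType.

(* log discrepancy a(E, X, lam * div f) of the exceptional divisor E given by
   (p, s):  a(E) = 1 + ord_E K_{Y/X} - lam * ord_E f *)
Definition ld (f : poly2) (lam : R) (p : F * F) (s : seq (option F)) : R :=
  let Phi := chart p s in
  1 + (ordx (jac Phi))%:R - lam * (ordx (eval2 f Phi.1 Phi.2))%:R.

(* (X, lam * div f) is lc: a(E) >= 0 for every prime divisor E over X,
   i.e. for exceptional divisors (centred at closed points) and for the prime
   divisors {g = 0} of X, whose log discrepancy is 1 - lam * ord_g f. *)
Definition lc_pair (f : poly2) (lam : R) : Prop :=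
  (forall p s, 0 <= ld f lam p s) /\
  (forall g : poly2, irreducible2 g ->
     forall (k : nat) (h : poly2), f = g ^+ k * h -> lam * k%:R <= 1).

Definition mld0 (f : poly2) (lam : R) : \bar R :=
  ereal_inf [set (ld f lam (0, 0) s)%:E | s in [set: seq (option F)]].

End Defs.

From Pilot Require Import Defs.
From HB Require Import structures.
From mathcomp Require Import all_boot all_order all_algebra.
From mathcomp Require Import classical_sets boolp reals ereal.
From mathcomp Require Import ring zify lra.
Import Order.TTheory GRing.Theory Num.Theory.
Local Open Scope ring_scope.
Local Open Scope classical_set_scope.
Set Implicit Arguments. Unset Strict Implicit. Unset Printing Implicit Defensive.

(* Along any chain of point blow-ups over the origin, the original coordinates
   pull back to x^g1 y^d1 U1 and x^g2 y^d2 U2 with units Ui, and the Jacobian to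
   x^a y^b U with g1 + g2 <= a + 1.  For the last exceptional divisor E = {x = 0}
   this gives a(E) = 1 + a - lam ord_E (x^m + y^n) >= toric_ld g1 g2: the order
   is min (m g1, n g2) unless both terms have the same order and cancel, and the
   extra order k1 created by the cancellation obeys g1 + g2 + k1 <= a + 1, which
   suffices as lam <= 1.  Conversely, toric blow-ups following the Euclidean
   algorithm on (p1, p2) reach the divisor with weights (p1, p2) / k,
   k = gcd (p1, p2), whose log discrepancy is exactly toric_ld; it is >= 0 as the
   pair is lc, and toric_ld is homogeneous, so toric_ld p1 p2 is no smaller. *)

Section Substitution.
Variable F : fieldType.
Local Notation p2 := (poly2 F).
Local Notation xv := (xv F).
Local Notation yv := (yv F).

Lemma commr_rmorph_poly2 (A : nzSemiRingType) (f : A -> p2) (u : p2) :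
  commr_rmorph f u.
Proof. by move=> a; rewrite /GRing.comm mulrC. Qed.

Definition subst_x (P : p2) : {poly F} -> p2 :=
  horner_morph (@commr_rmorph_poly2 _ (polyC \o polyC : {rmorphism F -> p2}) P).

Definition subst2 (P Q : p2) : p2 -> p2 :=
  horner_morph (@commr_rmorph_poly2 _ (subst_x P) Q).

Lemma subst2D P Q p q : subst2 P Q (p + q) = subst2 P Q p + subst2 P Q q.
Proof. exact: rmorphD. Qed.

Lemma subst2B P Q p q : subst2 P Q (p - q) = subst2 P Q p - subst2 P Q q.
Proof. exact: rmorphB. Qed.

Lemma subst2M P Q p q : subst2 P Q (p * q) = subst2 P Q p * subst2 P Q q.
Proof. exact: rmorphM. Qed.

Lemma subst2X P Q p k : subst2 P Q (p ^+ k) = subst2 P Q p ^+ k.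
Proof. exact: rmorphXn. Qed.

Lemma subst2_0 P Q : subst2 P Q 0 = 0.
Proof. exact: rmorph0. Qed.

Lemma subst2_1 P Q : subst2 P Q 1 = 1.
Proof. exact: rmorph1. Qed.

Lemma subst2_x P Q : subst2 P Q xv = P.
Proof. by rewrite /subst2 /Defs.xv horner_morphC; exact: horner_morphX. Qed.

Lemma subst2_y P Q : subst2 P Q yv = Q.
Proof. by rewrite /subst2 /Defs.yv horner_morphX. Qed.

Lemma subst2_cst P Q c : subst2 P Q (cst c) = cst c.
Proof. rewrite /subst2 /Defs.cst horner_morphC; exact: horner_morphC. Qed.

Lemma size_map_poly_le (A B : nzSemiRingType) (f : A -> B) (p : {poly A}) :
  (size (map_poly f p) <= size p)%N.
Proof. by rewrite /map_poly size_poly. Qed.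

Lemma subst_xE P q : subst_x P q = \sum_(j < size q) cst q`_j * P ^+ j.
Proof.
rewrite /subst_x /horner_morph (horner_coef_wide _ (size_map_poly_le _ _)).
by apply: eq_bigr => j _; rewrite coef_map_id0.
Qed.

Lemma eval2E p P Q : eval2 p P Q = subst2 P Q p.
Proof.
rewrite /eval2 /subst2.
rewrite /horner_morph (horner_coef_wide _ (size_map_poly_le _ _)).
apply: eq_bigr => i _; rewrite coef_map_id0; last first.
  by rewrite subst_xE size_poly0 big_ord0.
by rewrite subst_xE.
Qed.

Lemma poly2_ind (K : p2 -> Prop) :
  (forall c, K (cst c)) -> K xv -> K yv ->
  (forall p q, K p -> K q -> K (p + q)) ->
  (forall p q, K p -> K q -> K (p * q)) -> forall p, K p.
Proof.
move=> Kc Kx Ky KD KM.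
have K0 : K 0 by have := Kc 0; rewrite /Defs.cst !polyC0.
have Kq (q : {poly F}) : K q%:P.
  elim/poly_ind: q => [|q c Kq]; first by rewrite polyC0.
  by rewrite polyCD polyCM; apply: KD; [apply: KM | exact: Kc].
elim/poly_ind => [|p q Kp] //.
by apply: KD; [apply: KM | exact: Kq].
Qed.

Definition eval00 : {rmorphism p2 -> F} :=
  horner_eval (0 : F) \o horner_eval (0 : {poly F}).

Lemma eval00E p : eval00 p = p.[0].[0].
Proof. by []. Qed.

Lemma eval00_cst c : eval00 (cst c) = c.
Proof. by rewrite eval00E /Defs.cst !hornerC. Qed.

Lemma eval00_x : eval00 xv = 0.
Proof. by rewrite eval00E /Defs.xv hornerC hornerX. Qed.

Lemma eval00_y : eval00 yv = 0.
Proof. by rewrite eval00E /Defs.yv hornerX horner0. Qed.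

Lemma eval00_subst2 P Q p : eval00 P = 0 -> eval00 Q = 0 ->
  eval00 (subst2 P Q p) = eval00 p.
Proof.
move=> P0 Q0; elim/poly2_ind: p => [c|||p q Hp Hq|p q Hp Hq].
- by rewrite subst2_cst.
- by rewrite subst2_x P0 eval00_x.
- by rewrite subst2_y Q0 eval00_y.
- by rewrite subst2D !rmorphD Hp Hq.
- by rewrite subst2M !rmorphM Hp Hq.
Qed.

End Substitution.

Arguments eval00 {F}.

Section Derivatives.
Variable F : fieldType.
Local Notation p2 := (poly2 F).
Local Notation xv := (xv F).
Local Notation yv := (yv F).
Local Notation dx := (@dx F).
Local Notation dy := (@dy F).
Local Notation jac := (@jac F).

Lemma dxD (p q : p2) : dx (p + q) = dx p + dx q.
Proof.
by apply/polyP => i; rewrite /dx coefD !coef_map_id0 ?deriv0 // coefD derivD.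
Qed.

Lemma dxM (p q : p2) : dx (p * q) = dx p * q + p * dx q.
Proof.
apply/polyP => i; rewrite /dx coefD coef_map_id0 ?deriv0 // !coefM.
rewrite raddf_sum -big_split /=; apply: eq_bigr => j _.
by rewrite derivM !coef_map_id0 ?deriv0.
Qed.

Lemma dx_cst c : dx (cst c) = 0.
Proof. by rewrite /dx /Defs.cst map_polyC /= derivC polyC0. Qed.

Lemma dx_x : dx xv = 1.
Proof. by rewrite /dx /Defs.xv map_polyC /= derivX polyC1. Qed.

Lemma dx_y : dx yv = 0.
Proof.
apply/polyP => i; rewrite /dx /Defs.yv coef_map_id0 ?deriv0 // coefX coef0.
by case: (i == 1)%N; rewrite ?deriv0 // -polyC1 derivC.
Qed.

Lemma dyD (p q : p2) : dy (p + q) = dy p + dy q.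
Proof. exact: derivD. Qed.

Lemma dyM (p q : p2) : dy (p * q) = dy p * q + p * dy q.
Proof. exact: derivM. Qed.

Lemma dy_cst c : dy (cst c) = 0.
Proof. exact: derivC. Qed.

Lemma dy_x : dy xv = 0.
Proof. exact: derivC. Qed.

Lemma dy_y : dy yv = 1.
Proof. exact: derivX. Qed.

Lemma dx_subst2 P Q p :
  dx (subst2 P Q p) = subst2 P Q (dx p) * dx P + subst2 P Q (dy p) * dx Q.
Proof.
elim/poly2_ind: p => [c|||p q Hp Hq|p q Hp Hq].
- by rewrite subst2_cst dx_cst dy_cst subst2_0 !mul0r addr0.
- by rewrite subst2_x dx_x dy_x subst2_1 subst2_0 mul1r mul0r addr0.
- by rewrite subst2_y dx_y dy_y subst2_1 subst2_0 mul1r mul0r add0r.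
- by rewrite subst2D dxD Hp Hq dxD dyD !subst2D; ring.
- by rewrite subst2M dxM Hp Hq dxM dyM !subst2D !subst2M; ring.
Qed.

Lemma dy_subst2 P Q p :
  dy (subst2 P Q p) = subst2 P Q (dx p) * dy P + subst2 P Q (dy p) * dy Q.
Proof.
elim/poly2_ind: p => [c|||p q Hp Hq|p q Hp Hq].
- by rewrite subst2_cst dx_cst dy_cst subst2_0 !mul0r addr0.
- by rewrite subst2_x dx_x dy_x subst2_1 subst2_0 mul1r mul0r addr0.
- by rewrite subst2_y dx_y dy_y subst2_1 subst2_0 mul1r mul0r add0r.
- by rewrite subst2D dyD Hp Hq dxD dyD !subst2D; ring.
- by rewrite subst2M dyM Hp Hq dxM dyM !subst2D !subst2M; ring.
Qed.

Lemma jac_comp_pmap (psi : Defs.pmap F) P Q :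
  jac (comp_pmap psi P Q) = subst2 P Q (jac psi) * jac (P, Q).
Proof.
by rewrite /jac /comp_pmap /= !eval2E !dx_subst2 !dy_subst2 subst2B !subst2M; ring.
Qed.

End Derivatives.

Section Monomials.
Variable F : fieldType.
Local Notation p2 := (poly2 F).
Local Notation xv := (xv F).
Local Notation yv := (yv F).

Lemma coef_xvXM k (W : p2) i : (xv ^+ k * W)`_i = 'X^k * W`_i.
Proof. by rewrite /Defs.xv -polyC_exp coefCM. Qed.

Lemma ordx_xvXM k (W : p2) i0 : (W`_i0)`_0 != 0 -> ordx (xv ^+ k * W) = k.
Proof.
move=> W0; set q := xv ^+ k * W.
have cq i : coefx q i = 'X^k * W`_i by rewrite /coefx coef_xvXM.
have qk : (coefx q i0)`_k != 0 by rewrite cq coefXnM ltnn subnn.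
have i0q : (i0 < size q)%N.
  rewrite ltnNge; apply: contra qk => /(nth_default 0) q0.
  by rewrite /coefx q0 coef0.
rewrite /ordx; apply/eqP; rewrite eqn_leq; apply/andP; split.
- apply/bigmax_leqP => j /forallP /(_ (Ordinal i0q)) /dvdpP [t /= qt].
  by rewrite leqNgt; apply: contra qk => jk; rewrite qt coefMXn jk.
- have kB : (k < (\max_(i < size q) size (coefx q i)).+1)%N.
    rewrite ltnS; apply: leq_trans (leq_bigmax (Ordinal i0q)).
    by rewrite ltnW // ltnNge; apply: contra qk => /(nth_default 0) ->.
  apply: (leq_bigmax_cond (Ordinal kB)).
  by apply/forallP => i; rewrite cq dvdp_mulIl.
Qed.

Definition monom g d (U : p2) : p2 := xv ^+ g * yv ^+ d * U.

Definition unit0 (U : p2) := eval00 U != 0.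

Lemma unit0E U : unit0 U = ((U`_0)`_0 != 0).
Proof. by rewrite /unit0 eval00E !horner_coef0. Qed.

Lemma monomX g d U k : monom g d U ^+ k = monom (g * k) (d * k) (U ^+ k).
Proof. by rewrite /monom !exprMn !exprM. Qed.

Lemma monom_xv g d U : monom g d U * xv = monom g.+1 d U.
Proof. by rewrite /monom exprS; ring. Qed.

Lemma monom_yv g d U : monom g d U * yv = monom g d.+1 U.
Proof. by rewrite /monom [yv ^+ d.+1]exprS; ring. Qed.

Lemma subst2_monom P Q g d U :
  subst2 P Q (monom g d U) = P ^+ g * Q ^+ d * subst2 P Q U.
Proof. by rewrite /monom !subst2M !subst2X subst2_x subst2_y. Qed.

Lemma unit0M U V : unit0 U -> unit0 V -> unit0 (U * V).
Proof. by rewrite /unit0 rmorphM; apply: mulf_neq0. Qed.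

Lemma unit0X U k : unit0 U -> unit0 (U ^+ k).
Proof. by rewrite /unit0 rmorphXn; apply: expf_neq0. Qed.

Lemma unit0_1 : unit0 1.
Proof. by rewrite /unit0 rmorph1 oner_neq0. Qed.

Lemma ordx_monom g d U : unit0 U -> ordx (monom g d U) = g.
Proof.
rewrite unit0E => U0; rewrite /monom -mulrA (@ordx_xvXM _ _ d) //.
by rewrite /Defs.yv coefXnM ltnn subnn.
Qed.

Lemma coef0_monom g d (U : p2) i : ((monom g d U)`_i)`_0 =
  if (0 < g)%N then 0 else if (i < d)%N then 0 else (U`_(i - d))`_0.
Proof.
rewrite /monom -mulrA coef_xvXM coefXnM /Defs.yv coefXnM.
by case: (0 < g)%N => //; rewrite sub0n; case: (i < d)%N; rewrite ?coef0.
Qed.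

Lemma ordx_monomD g1 d1 U1 g2 d2 U2 : unit0 U1 -> unit0 U2 ->
  (g1 != g2) || (d1 != d2) -> ordx (monom g1 d1 U1 + monom g2 d2 U2) = minn g1 g2.
Proof.
rewrite !unit0E => U1_0 U2_0 g12.
have monom_split g k d U : (k <= g)%N -> monom g d U = xv ^+ k * monom (g - k) d U.
  by move=> kg; rewrite /monom !mulrA -exprD subnKC.
rewrite (monom_split g1 (minn g1 g2)) ?geq_minl // (monom_split g2 (minn g1 g2)) ?geq_minr //.
rewrite -mulrDr.
have [g1g2|g2g1|eg] := ltngtP g1 g2.
- apply: (@ordx_xvXM _ _ d1); rewrite !coefD !coef0_monom.
  by rewrite !subnn subn_gt0 g1g2 !ltnn addr0.
- apply: (@ordx_xvXM _ _ d2); rewrite !coefD !coef0_monom.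
  by rewrite !subnn subn_gt0 g2g1 !ltnn add0r.
- move: g12; rewrite eg eqxx /= !subnn => d12.
  have [d1d2|d2d1|ed] := ltngtP d1 d2; last by rewrite ed eqxx in d12.
  + apply: (@ordx_xvXM _ _ d1); rewrite !coefD !coef0_monom /= !ltnn !subnn d1d2.
    by rewrite addr0.
  + apply: (@ordx_xvXM _ _ d2); rewrite !coefD !coef0_monom /= !ltnn !subnn d2d1.
    by rewrite add0r.
Qed.

End Monomials.

Section BlowupCharts.
Variable F : fieldType.
Local Notation p2 := (poly2 F).
Local Notation xv := (xv F).
Local Notation yv := (yv F).
Local Notation jac := (@jac F).

Lemma cst0 : cst 0 = 0 :> p2.
Proof. by rewrite /Defs.cst !polyC0. Qed.

Lemma step_Some0 (psi : Defs.pmap F) : step psi (Some 0) = comp_pmap psi xv (xv * yv).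
Proof. by rewrite /step cst0 add0r. Qed.

Lemma chart_Some0 p s : chart p s = step (centre_coords p s) (Some 0) :> Defs.pmap F.
Proof. by rewrite step_Some0. Qed.

Lemma jac_start0 : jac (start (0, 0)) = 1.
Proof. by rewrite /jac /start /= !(dxD, dyD, dx_x, dy_x, dx_y, dy_y, dx_cst, dy_cst); ring. Qed.

Lemma jac_chart_Some c : jac (xv, xv * (cst c + yv)) = xv.
Proof.
by rewrite /jac /= !(dxM, dyM, dxD, dyD, dx_x, dy_x, dx_y, dy_y, dx_cst, dy_cst); ring.
Qed.

Lemma jac_chart_None : jac (xv * yv, yv) = yv.
Proof. by rewrite /jac /= !(dxM, dyM, dx_x, dy_x, dx_y, dy_y); ring. Qed.

Lemma subst2_monom_Some c g d U :
  subst2 xv (xv * (cst c + yv)) (monom g d U) =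
  monom (g + d) 0 ((cst c + yv) ^+ d * subst2 xv (xv * (cst c + yv)) U).
Proof. by rewrite subst2_monom /monom exprMn exprD expr0; ring. Qed.

Lemma subst2_monom_Some0 g d U :
  subst2 xv (xv * yv) (monom g d U) = monom (g + d) d (subst2 xv (xv * yv) U).
Proof. by rewrite subst2_monom /monom exprMn exprD; ring. Qed.

Lemma subst2_monom_None g d U :
  subst2 (xv * yv) yv (monom g d U) = monom g (g + d) (subst2 (xv * yv) yv U).
Proof. by rewrite subst2_monom /monom exprMn exprD; ring. Qed.

Lemma unit0_subst2_Some c U : unit0 U -> unit0 (subst2 xv (xv * (cst c + yv)) U).
Proof. by rewrite /unit0 eval00_subst2 // ?eval00_x // rmorphM eval00_x mul0r. Qed.

Lemma unit0_subst2_Some0 U : unit0 U -> unit0 (subst2 xv (xv * yv) U).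
Proof. by have := @unit0_subst2_Some 0 U; rewrite cst0 add0r. Qed.

Lemma unit0_subst2_None U : unit0 U -> unit0 (subst2 (xv * yv) yv U).
Proof. by rewrite /unit0 eval00_subst2 // ?eval00_y // rmorphM eval00_x mul0r. Qed.

Lemma pchar0_natr_inj : [pchar F] =i pred0 -> injective (fun i : nat => i%:R : F).
Proof.
move=> /(pcharf0P F) F0 i j; wlog ij : i j / (i <= j)%N.
  move=> W; case/orP: (leq_total i j) => [/W //|ji eij].
  by apply/esym/W.
move=> eij; have : (j - i)%:R == 0 :> F by rewrite natrB // eij subrr.
by rewrite F0 subn_eq0 => ji; apply/eqP; rewrite eqn_leq ij ji.
Qed.

(* If (c + t)^i + (c + t)^j vanishes at t = 0 then c^j = -c^i, so its derivative
   there is c^(i-1) (i - j), nonzero in characteristic 0. *)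
Lemma shifted_powersD_simple_root c i j : [pchar F] =i pred0 -> c != 0 -> i <> j ->
  exists e V, [/\ (cst c + yv) ^+ i + (cst c + yv) ^+ j = monom 0 e V, (e <= 1)%N
                & unit0 V].
Proof.
move=> F0 c0 ij; set h : {poly F} := ('X + c%:P) ^+ i + ('X + c%:P) ^+ j.
pose emb : {poly F} -> p2 := map_poly polyC.
have ->: (cst c + yv) ^+ i + (cst c + yv) ^+ j = emb h.
  by rewrite /emb /h rmorphD !rmorphXn /= map_polyXaddC /Defs.cst /Defs.yv [_ + 'X]addrC.
have unit0_emb q : unit0 (emb q) = (q.[0] != 0).
  by rewrite unit0E /emb coef_map /= coefC /= horner_coef0.
have [h0|h0] := eqVneq h.[0] 0; last first.
  by exists 0%N, (emb h); rewrite unit0_emb /monom !expr0 !mul1r.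
have /factor_theorem [w hw] : root h 0 by apply/eqP.
rewrite subr0 in hw.
exists 1%N, (emb w); split=> //.
  by rewrite hw /emb rmorphM /= map_polyX /monom expr0 expr1 mul1r mulrC.
rewrite unit0_emb; have <- : h^`().[0] = w.[0].
  by rewrite hw derivM derivX hornerD hornerM hornerX mulr0 add0r mulr1.
have cdh : c * h^`().[0] = c ^+ i *+ i + c ^+ j *+ j.
  rewrite /h derivD !deriv_exp derivD derivX derivC addr0 !mul1r hornerD !hornerMn.
  rewrite !horner_exp hornerD hornerX hornerC add0r mulrDr.
  have cXn k : c * (c ^+ k.-1 *+ k) = c ^+ k *+ k.
    by case: k => [|k]; rewrite ?mulr0n ?mulr0 // mulrnAr -exprS.
  by rewrite !cXn.
move: h0; rewrite /h hornerD !horner_exp hornerD hornerX hornerC add0r => h0.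
have cj : c ^+ j = - c ^+ i by apply/eqP; rewrite -addr_eq0 addrC h0.
apply/eqP => dh0; apply: ij.
move: cdh; rewrite dh0 mulr0 cj mulNrn => /eqP; rewrite eq_sym subr_eq0 => /eqP cij.
apply: (pchar0_natr_inj F0); apply: (mulfI (expf_neq0 i c0)).
by rewrite !mulr_natr.
Qed.

End BlowupCharts.

Section Arithmetic.
Variables m n : nat.
Hypotheses (m_gt0 : (0 < m)%N) (n_gt0 : (0 < n)%N).

Lemma det1_not_matched g1 d1 g2 d2 : (g1 * d2 = d1 * g2 + 1)%N ->
  (m * g1 = n * g2)%N -> (m * d1 = n * d2)%N -> False.
Proof.
move=> det e1 e2.
have : (m * n * (g1 * d2) = m * n * (d1 * g2))%N.
  by rewrite mulnACA [(m * n * (d1 * g2))%N]mulnACA e1 -e2 mulnC.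
by rewrite det mulnDr muln1; lia.
Qed.

Lemma proportional_unmatched g1 d1 g2 d2 : (0 < g2 + d2)%N ->
  (g1 * d2 = d1 * g2)%N -> (m * g1 <> n * g2 \/ m * d1 <> n * d2)%N ->
  (m * (g1 + d1) <> n * (g2 + d2))%N.
Proof.
move=> p2 det unm e.
have e1 : (m * g1 = n * g2)%N.
  apply/eqP; rewrite -(eqn_pmul2r p2); apply/eqP.
  by rewrite -mulnA mulnDr det -mulnDl mulnA e mulnAC.
by case: unm => //; move: e; rewrite !mulnDr e1 => /addnI.
Qed.

End Arithmetic.

Section MonomialCharts.
Variable F : fieldType.
Local Notation p2 := (poly2 F).
Local Notation xv := (xv F).
Local Notation yv := (yv F).
Variables m n : nat.

Lemma jac_chart_Some0 : jac (xv, xv * yv) = xv.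
Proof. by have := @jac_chart_Some F 0; rewrite cst0 add0r. Qed.

(* The possible shapes of x^m + y^n pulled back to a chart where the original
   coordinates are x^gi y^di Ui. *)
Inductive fmn_shape (U1 U2 : p2) g1 d1 g2 d2 a b : Prop :=
| ShapeToric of U1 = 1 & U2 = 1 & (g1 * d2 = d1 * g2 + 1)%N
| ShapeUnmatched of (g1 * d2 = d1 * g2)%N & (m * g1 <> n * g2 \/ m * d1 <> n * d2)%N
| ShapeMatched k1 k2 V of (m * g1 = n * g2)%N & (m * d1 = n * d2)%N
    & U1 ^+ m + U2 ^+ n = monom k1 k2 V & unit0 V
    & (g1 + g2 + k1 <= a + 1)%N & (d1 + d2 + k2 <= b + 1)%N.

(* a + 1 - g1 - g2 and b + 1 - d1 - d2 are the log discrepancies of the axes of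
   the chart with respect to the lc pair formed by A^2 and its coordinate axes. *)
Inductive monomial_chart (psi : Defs.pmap F) g1 d1 g2 d2 a b : Prop :=
  MonomialChart U1 U2 U of
    psi.1 = monom g1 d1 U1 & psi.2 = monom g2 d2 U2 & jac psi = monom a b U
  & unit0 U1 & unit0 U2 & unit0 U
  & (0 < g1 + d1)%N & (0 < g2 + d2)%N & (g1 + g2 <= a + 1)%N & (d1 + d2 <= b + 1)%N
  & fmn_shape U1 U2 g1 d1 g2 d2 a b.

Lemma monomial_chart_start : monomial_chart (start (0, 0)) 1 0 0 1 0 0.
Proof.
apply: (MonomialChart (U1 := 1) (U2 := 1) (U := 1)); rewrite ?jac_start0 //;
  try exact: unit0_1; try exact: ShapeToric.
- by rewrite /start /= cst0 add0r /monom expr0 expr1 !mulr1.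
- by rewrite /start /= cst0 add0r /monom expr0 expr1 mul1r mulr1.
- by rewrite /monom !expr0 !mulr1.
Qed.

Lemma monomial_chart_Some0 psi g1 d1 g2 d2 a b :
  monomial_chart psi g1 d1 g2 d2 a b ->
  monomial_chart (step psi (Some 0)) (g1 + d1) d1 (g2 + d2) d2 (a + b).+1 b.
Proof.
case=> U1 U2 U psi1 psi2 jpsi U1_0 U2_0 U_0 p1 p2 q1 q2 shape.
pose S := subst2 xv (xv * yv).
apply: (MonomialChart (U1 := S U1) (U2 := S U2) (U := S U));
  try exact: unit0_subst2_Some0; try lia.
- by rewrite step_Some0 /= eval2E psi1 subst2_monom_Some0.
- by rewrite step_Some0 /= eval2E psi2 subst2_monom_Some0.
- by rewrite step_Some0 jac_comp_pmap jpsi subst2_monom_Some0 jac_chart_Some0 monom_xv.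
case: shape => [e1 e2 det|det unm|k1 k2 V e1 e2 hK V_0 i1 i2].
- by apply: ShapeToric; rewrite ?e1 ?e2 /S ?subst2_1 //; nia.
- by apply: ShapeUnmatched; [nia | case: unm; [left|right]; nia].
- apply: (ShapeMatched (k1 := k1 + k2) (k2 := k2) (V := S V)); try nia.
  + by rewrite -!subst2X -subst2D hK subst2_monom_Some0.
  + exact: unit0_subst2_Some0.
Qed.

Lemma monomial_chart_None psi g1 d1 g2 d2 a b :
  monomial_chart psi g1 d1 g2 d2 a b ->
  monomial_chart (step psi None) g1 (g1 + d1) g2 (g2 + d2) a (a + b).+1.
Proof.
case=> U1 U2 U psi1 psi2 jpsi U1_0 U2_0 U_0 p1 p2 q1 q2 shape.
pose S := subst2 (xv * yv) yv.
apply: (MonomialChart (U1 := S U1) (U2 := S U2) (U := S U));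
  try exact: unit0_subst2_None; try lia.
- by rewrite /= eval2E psi1 subst2_monom_None.
- by rewrite /= eval2E psi2 subst2_monom_None.
- by rewrite jac_comp_pmap jpsi subst2_monom_None jac_chart_None monom_yv.
case: shape => [e1 e2 det|det unm|k1 k2 V e1 e2 hK V_0 i1 i2].
- by apply: ShapeToric; rewrite ?e1 ?e2 /S ?subst2_1 //; nia.
- by apply: ShapeUnmatched; [nia | case: unm; [left|right]; nia].
- apply: (ShapeMatched (k1 := k1) (k2 := k1 + k2) (V := S V)); try nia.
  + by rewrite -!subst2X -subst2D hK subst2_monom_None.
  + exact: unit0_subst2_None.
Qed.

Lemma monomial_chart_Some psi c g1 d1 g2 d2 a b :
  [pchar F] =i pred0 -> (0 < m)%N -> (0 < n)%N -> c != 0 ->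
  monomial_chart psi g1 d1 g2 d2 a b ->
  monomial_chart (step psi (Some c)) (g1 + d1) 0 (g2 + d2) 0 (a + b).+1 0.
Proof.
move=> F0 m_gt0 n_gt0 c0.
case=> U1 U2 U psi1 psi2 jpsi U1_0 U2_0 U_0 p1 p2 q1 q2 shape.
set L := cst c + yv; pose S := subst2 xv (xv * L).
have L_0 : unit0 L by rewrite /unit0 rmorphD eval00_cst eval00_y addr0.
have LS_0 k V : unit0 V -> unit0 (L ^+ k * S V).
  by move=> V_0; apply: unit0M; [exact: unit0X | exact: unit0_subst2_Some].
apply: (MonomialChart (U1 := L ^+ d1 * S U1) (U2 := L ^+ d2 * S U2) (U := L ^+ b * S U));
  try exact: LS_0; try lia.
- by rewrite /= eval2E psi1 subst2_monom_Some.
- by rewrite /= eval2E psi2 subst2_monom_Some.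
- by rewrite jac_comp_pmap jpsi subst2_monom_Some jac_chart_Some monom_xv.
case: shape => [e1 e2 det|det unm|k1 k2 V e1 e2 hK V_0 i1 i2].
- rewrite e1 e2 /S subst2_1 !mulr1.
  have [me|mne] := eqVneq (m * (g1 + d1))%N (n * (g2 + d2))%N; last first.
    by apply: ShapeUnmatched; [lia | left; apply/eqP].
  have d12 : (d1 * m <> d2 * n)%N.
    by move/eqP: me => me e; apply: (det1_not_matched m_gt0 n_gt0 det); lia.
  have [e [V [hK e_le1 V_0]]] := shifted_powersD_simple_root F0 c0 d12.
  apply: (ShapeMatched (k1 := 0) (k2 := e) (V := V)); rewrite ?muln0 //; last by lia.
  by rewrite -!exprM.
- by apply: ShapeUnmatched; rewrite ?muln0 //; left; exact: proportional_unmatched.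
- apply: (ShapeMatched (k1 := k1 + k2) (k2 := 0) (V := L ^+ (d1 * m + k2) * S V));
    rewrite ?muln0 ?LS_0 //; try lia.
  rewrite !exprMn -!exprM [(d2 * n)%N]mulnC -e2 [(m * d1)%N]mulnC -mulrDr.
  rewrite -!subst2X -subst2D hK subst2_monom_Some /monom !exprD !expr0; ring.
Qed.

Lemma exists_monomial_chart s : [pchar F] =i pred0 -> (0 < m)%N -> (0 < n)%N ->
  exists g1 d1 g2 d2 a b, monomial_chart (centre_coords (0, 0) s) g1 d1 g2 d2 a b.
Proof.
move=> F0 m_gt0 n_gt0; rewrite /centre_coords.
have : exists g1 d1 g2 d2 a b, monomial_chart (start (0, 0)) g1 d1 g2 d2 a b.
  by exists 1%N, 0%N, 0%N, 1%N, 0%N, 0%N; exact: monomial_chart_start.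
elim: s (start (0, 0)) => [|[c|] s IHs] psi [g1 [d1 [g2 [d2 [a [b chart_psi]]]]]] /=.
- by exists g1, d1, g2, d2, a, b.
- apply: IHs; have [->|c0] := eqVneq c 0.
    by exists (g1 + d1)%N, d1, (g2 + d2)%N, d2, (a + b).+1, b; exact: monomial_chart_Some0.
  exists (g1 + d1)%N, 0%N, (g2 + d2)%N, 0%N, (a + b).+1, 0%N.
  exact: monomial_chart_Some.
- apply: IHs; exists g1, (g1 + d1)%N, g2, (g2 + d2)%N, a, (a + b).+1.
  exact: monomial_chart_None.
Qed.

End MonomialCharts.

Section ToricLogDiscrepancy.
Variable R : realFieldType.
Variables (lam : R) (m n : nat).
Hypothesis lam_ge0 : 0 <= lam.

Definition toric_ld (p1 p2 : nat) : R :=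
  (p1 + p2)%:R - Num.min (lam * (m * p1)%:R) (lam * (n * p2)%:R).

Lemma mulr_natr_minn i j : lam * (minn i j)%:R = Num.min (lam * i%:R) (lam * j%:R).
Proof.
have [ij|ji] := leqP i j.
  by rewrite min_l // ler_wpM2l // ler_nat.
by rewrite min_r // ler_wpM2l // ler_nat ltnW.
Qed.

Lemma toric_ldM k p1 p2 : toric_ld (k * p1) (k * p2) = k%:R * toric_ld p1 p2.
Proof.
rewrite /toric_ld -mulnDr natrM mulnCA [(n * (k * p2))%N]mulnCA !natrM !(mulrCA lam).
by rewrite -minr_pMr ?ler0n // mulrBr.
Qed.

Lemma toric_ld_le_unmatched g1 g2 a : (g1 + g2 <= a + 1)%N ->
  toric_ld g1 g2 <= 1 + a%:R - lam * (minn (m * g1) (n * g2))%:R.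
Proof.
rewrite -(ler_nat R) !natrD mulr_natr_minn /toric_ld => ga; lra.
Qed.

Lemma toric_ld_le_matched g1 g2 a k1 : lam <= 1 -> (m * g1 = n * g2)%N ->
  (g1 + g2 + k1 <= a + 1)%N -> toric_ld g1 g2 <= 1 + a%:R - lam * (m * g1 + k1)%:R.
Proof.
move=> lam_le1 e; rewrite -(ler_nat R) !natrD /toric_ld -e minxx natrD => ga.
have : lam * k1%:R <= k1%:R by rewrite ler_piMl.
lra.
Qed.

End ToricLogDiscrepancy.

Section LowerBound.
Variable F : fieldType.
Local Notation p2 := (poly2 F).
Variables (m n : nat) (R : realType) (lam : R).

Lemma eval2_fmn (P Q : p2) : eval2 (fmn F m n) P Q = P ^+ m + Q ^+ n.
Proof. by rewrite eval2E /fmn subst2D !subst2X subst2_x subst2_y. Qed.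

Lemma ordx_fmn_unmatched g1 d1 g2 d2 U1 U2 : unit0 U1 -> unit0 U2 ->
  (m * g1 != n * g2)%N || (m * d1 != n * d2)%N ->
  ordx (eval2 (fmn F m n) (monom g1 d1 U1) (monom g2 d2 U2)) = minn (m * g1) (n * g2).
Proof.
move=> U1_0 U2_0 unm; rewrite eval2_fmn !monomX ![(_ * m)%N]mulnC ![(_ * n)%N]mulnC.
by rewrite ordx_monomD ?unit0X.
Qed.

Lemma ordx_fmn_matched g1 d1 g2 d2 U1 U2 k1 k2 V : unit0 V ->
  (m * g1 = n * g2)%N -> (m * d1 = n * d2)%N -> U1 ^+ m + U2 ^+ n = monom k1 k2 V ->
  ordx (eval2 (fmn F m n) (monom g1 d1 U1) (monom g2 d2 U2)) = (m * g1 + k1)%N.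
Proof.
move=> V_0 e1 e2 UV; rewrite eval2_fmn !monomX ![(_ * m)%N]mulnC ![(_ * n)%N]mulnC -e1 -e2.
have -> : monom (m * g1) (m * d1) (U1 ^+ m) + monom (m * g1) (m * d1) (U2 ^+ n) =
          monom (m * g1 + k1) (m * d1 + k2) V.
  by rewrite /monom -!mulrDr UV /monom !exprD; ring.
exact: ordx_monom.
Qed.


Lemma toric_ld_le_ld s : [pchar F] =i pred0 -> (0 < m)%N -> (0 < n)%N ->
  0 < lam -> lam <= 1 ->
  exists g1 g2, [/\ (0 < g1)%N, (0 < g2)%N & toric_ld lam m n g1 g2 <= ld (fmn F m n) lam (0, 0) s].
Proof.
move=> F0 m_gt0 n_gt0 lam_gt0 lam_le1.
have [g1 [d1 [g2 [d2 [a [b chart_s]]]]]] := exists_monomial_chart s F0 m_gt0 n_gt0.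
move: (monomial_chart_Some0 chart_s); rewrite -chart_Some0.
case=> U1 U2 U psi1 psi2 jpsi U1_0 U2_0 U_0 p1 p2 q1 _ shape.
exists (g1 + d1)%N, (g2 + d2)%N; split; [lia | lia |].
rewrite /ld jpsi ordx_monom // psi1 psi2.
have lam_ge0 := ltW lam_gt0.
case: shape => [-> -> det|det unm|k1 k2 V e1 e2 UV V_0 i1 _].
- rewrite ordx_fmn_unmatched ?unit0_1 ?toric_ld_le_unmatched //.
  rewrite -negb_and; apply/negP => /andP[/eqP e1 /eqP e2].
  exact: (det1_not_matched m_gt0 n_gt0 det e1 e2).
- rewrite ordx_fmn_unmatched ?toric_ld_le_unmatched //.
  by case: unm => /eqP unm; rewrite unm ?orbT.
- by rewrite (ordx_fmn_matched V_0 e1 e2 UV) toric_ld_le_matched.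
Qed.

End LowerBound.

Section UpperBound.
Variable F : fieldType.
Variables (m n : nat) (R : realType) (lam : R).
Hypotheses (m_gt0 : (0 < m)%N) (n_gt0 : (0 < n)%N).

Definition toric_chart (psi : Defs.pmap F) g1 d1 g2 d2 := exists a b,
  [/\ monomial_chart m n psi g1 d1 g2 d2 a b, a.+1 = (g1 + g2)%N,
      b.+1 = (d1 + d2)%N & (g1 * d2 = d1 * g2 + 1)%N].

Lemma toric_chart_start : toric_chart (start (0, 0)) 1 0 0 1.
Proof. by exists 0%N, 0%N; split => //; exact: monomial_chart_start. Qed.

Lemma toric_chart_Some0 psi g1 d1 g2 d2 : toric_chart psi g1 d1 g2 d2 ->
  toric_chart (step psi (Some 0)) (g1 + d1) d1 (g2 + d2) d2.
Proof.
case=> a [b [chart_psi ea eb det]]; exists (a + b).+1, b.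
by split; [exact: monomial_chart_Some0 | lia | lia | nia].
Qed.

Lemma toric_chart_None psi g1 d1 g2 d2 : toric_chart psi g1 d1 g2 d2 ->
  toric_chart (step psi None) g1 (g1 + d1) g2 (g2 + d2).
Proof.
case=> a [b [chart_psi ea eb det]]; exists a, (a + b).+1.
by split; [exact: monomial_chart_None | lia | lia | nia].
Qed.

(* Blowing up along the Euclidean algorithm on (i, j) realises the monomial
   valuation with weights (i, j) up to the factor k = gcd(i, j). *)
Lemma toric_chart_euclid i j psi g1 d1 g2 d2 : (0 < i)%N -> (0 < j)%N ->
  toric_chart psi g1 d1 g2 d2 ->
  exists s G1 D1 G2 D2 k, [/\ toric_chart (foldl (@step F) psi s) G1 D1 G2 D2,
    (0 < k)%N, (i * g1 + j * d1 = k * (G1 + D1))%N & (i * g2 + j * d2 = k * (G2 + D2))%N].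
Proof.
move=> i_gt0 j_gt0 toric; have [N ijN] : exists N, (i + j <= N)%N by exists (i + j).
elim: N => [|N IH] in i j psi g1 d1 g2 d2 i_gt0 j_gt0 toric ijN *; first lia.
have [ij|ji|<-] := ltngtP i j.
- have [s [G1 [D1 [G2 [D2 [k [toric' k_gt0 e1 e2]]]]]]] :=
    IH i (j - i)%N _ _ _ _ _ i_gt0 ltac:(lia) (toric_chart_Some0 toric) ltac:(lia).
  by exists (Some 0 :: s), G1, D1, G2, D2, k; split => //; rewrite -?e1 -?e2; nia.
- have [s [G1 [D1 [G2 [D2 [k [toric' k_gt0 e1 e2]]]]]]] :=
    IH (i - j)%N j _ _ _ _ _ ltac:(lia) j_gt0 (toric_chart_None toric) ltac:(lia).
  by exists (None :: s), G1, D1, G2, D2, k; split => //; rewrite -?e1 -?e2; nia.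
- by exists [::], g1, d1, g2, d2, i; split => //; rewrite mulnDr.
Qed.

Lemma ld_toric_chart s g1 d1 g2 d2 : 0 <= lam ->
  toric_chart (chart (0, 0) s) g1 d1 g2 d2 ->
  ld (fmn F m n) lam (0, 0) s = toric_ld lam m n g1 g2.
Proof.
move=> lam_ge0 [a [b [[U1 U2 U psi1 psi2 jpsi U1_0 U2_0 U_0 _ _ _ _ _] ea _ det]]].
rewrite /ld jpsi ordx_monom // psi1 psi2 ordx_fmn_unmatched //; last first.
  rewrite -negb_and; apply/negP => /andP[/eqP e1 /eqP e2].
  exact: (det1_not_matched m_gt0 n_gt0 det e1 e2).
by rewrite mulr_natr_minn // /toric_ld -ea -natr1 [1 + _]addrC.
Qed.

Lemma exists_ld_toric p1 p2 : 0 <= lam -> (0 < p1)%N -> (0 < p2)%N ->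
  exists s k q1 q2, [/\ (0 < k)%N, p1 = (k * q1)%N, p2 = (k * q2)%N &
    ld (fmn F m n) lam (0, 0) s = toric_ld lam m n q1 q2].
Proof.
move=> lam_ge0 p1_gt0 p2_gt0.
have [s [G1 [D1 [G2 [D2 [k [toric k_gt0 e1 e2]]]]]]] :=
  toric_chart_euclid p1_gt0 p2_gt0 toric_chart_start.
exists s, k, (G1 + D1)%N, (G2 + D2)%N; split => //; try lia.
by apply: ld_toric_chart => //; rewrite chart_Some0; exact: toric_chart_Some0.
Qed.

End UpperBound.

Unset Implicit Arguments.

Theorem mainTheorem13 (F : closedFieldType) (R : realType) (m n : nat) (lam : R) :
  [pchar F] =i pred0 ->
  (0 < m)%N -> (0 < n)%N -> 0 < lam -> lam <= 1 ->
  lc_pair (fmn F m n) lam ->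
  mld0 (fmn F m n) lam =
  ereal_inf [set ((p.1 + p.2)%:R
                   - Num.min (lam * (m * p.1)%:R) (lam * (n * p.2)%:R))%:E
            | p in [set p : nat * nat | (0 < p.1)%N /\ (0 < p.2)%N]].
Proof.
move=> F0 m_gt0 n_gt0 lam_gt0 lam_le1 [ld_ge0 _]; have lam_ge0 := ltW lam_gt0.
apply/eqP; rewrite eq_le; apply/andP; split; apply/ereal_infP.
- move=> _ [[p1 p2] [/= p1_gt0 p2_gt0] <-].
  have [s [k [q1 [q2 [k_gt0 -> -> ld_q]]]]] :=
    exists_ld_toric F m_gt0 n_gt0 lam_ge0 p1_gt0 p2_gt0.
  apply: le_trans (ereal_inf_lbound _) _; first by exists s.
  rewrite lee_fin ld_q -[X in _ <= X]/(toric_ld lam m n (k * q1) (k * q2)) toric_ldM.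
  by rewrite ler_peMl ?ler1n // -ld_q ld_ge0.
- move=> _ [s _ <-].
  have [g1 [g2 [g1_gt0 g2_gt0 toric_le]]] :=
    toric_ld_le_ld s F0 m_gt0 n_gt0 lam_gt0 lam_le1.
  apply: le_trans (ereal_inf_lbound _) _; first by exists (g1, g2).
  by rewrite lee_fin.
Qed.
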